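(* Under the standing assumptions, no transaction DAG produced by the ABC protocol contains a pair of confirmed transactions that conflict.
   Context: ABC is a cryptocurrency protocol. An output is a pair (value, owner public key). A transaction $t$ has a set of inputs (outputs of earlier transactions, which $t$ spends), a set of outputs with the same total value, and a validator public key; it is signed by its inputs' secret keys. The genesis is an input-less transaction with output values summing to $M$, confirmed from the start. An ack is a validator-signed message containing a reference to the previous ack of the same validator and references to a set of transactions it signs. Messages reference only earlier messages and form a DAG rooted at genesis. $\mathrm{past}(x)$ is the set of messages reachable from $x$ by following references; $\mathrm{past}(A)=\bigcup_{x\in A}\mathrm{past}(x)$. The stake delegated to validator $v$ in $\mathrm{past}(A)$ (for a set of acks $A$) is the sum of the values of outputs, unspent in $\mathrm{past}(A)$, of transactions confirmed in $\mathrm{past}(A)$ that indicate $v$ as validator. A transaction $t$ is confirmed if the transactions producing its inputs are confirmed and there exists a set of acks $A_t$ such that the validators signing $t$ in $A_t$ have total delegated stake in $\mathrm{past}(A_t)$ strictly exceeding $\tfrac23 M$, and no other transaction in $\mathrm{past}(A_t)$ shares an input with $t$. Dependence: $t'$ depends on $t$ if $t'$ spends an output of $t$, closed reflexively and transitively. Conflict: two transactions spending the same output conflict; if $t_1,t_2$ conflict then every transaction depending on $t_1$ conflicts with every transaction depending on $t_2$. Standing assumptions: honest validators reference their own previous ack in every new ack and never sign two transactions sharing an input; honest agents never spend an output twice; the adversary behaves arbitrarily and controls message delivery (messages are eventually delivered, no timing bound); at all times the stake delegated to the adversary is less than $M/3$: genesis outputs delegated to adversarial validators sum to less than $M/3$,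 a transaction delegated to an honest validator decreases the adversary's count by the value of its adversary-delegated inputs when it is confirmed, and a transaction delegated to the adversary increases the count by the value of its honest-delegated inputs when it is issued. *)

From mathcomp Require Import all_boot.
Set Implicit Arguments. Unset Strict Implicit. Unset Printing Implicit Defensive.

Definition key := nat.

(* Messages, with references to other messages of type T.
   - Genesis outs : the input-less genesis transaction; each output is
       (value, owner key, validator key)  (genesis outputs are delegated
       individually, cf. "genesis outputs delegated to adversarial validators").
   - Tx ins outs v : a transaction spending the outputs [ins] (an output is
       referenced as (producing transaction, index)), creating outputs
       [outs] = (value, owner key), with validator key [v].
   - Ack v prev txs : an ack signed by validator [v], referencing its
       previous ack [prev] (None for the first one) and the transactions
       [txs] it signs. *)
Inductive msg (T : Type) : Type :=
| Genesis of seq (nat * key * key)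
| Tx of seq (T * nat) & seq (nat * key) & key
| Ack of key & option T & seq T.

Arguments Genesis {T}.
Arguments Tx {T}.
Arguments Ack {T}.

Section ABC.
Variable T : finType.
Variable m : T -> msg T.

Definition is_tx (x : T) : bool := if m x is Ack _ _ _ then false else true.
Definition is_ack (x : T) : bool := if m x is Ack _ _ _ then true else false.
Definition is_genesis (x : T) : bool := if m x is Genesis _ then true else false.
Definition is_ntx (x : T) : bool := if m x is Tx _ _ _ then true else false.

Definition ins (x : T) : seq (T * nat) := if m x is Tx i _ _ then i else [::].
Definition outs (x : T) : seq (nat * key * key) :=
  match m x with
  | Genesis o => o
  | Tx _ o v => [seq (p.1, p.2, v) | p <- o]
  | Ack _ _ _ => [::]
  end.
Definition txv (x : T) : key := if m x is Tx _ _ v then v else 0.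
Definition ackv (x : T) : key := if m x is Ack v _ _ then v else 0.
Definition ack_prev (x : T) : option T := if m x is Ack _ p _ then p else None.
Definition ack_txs (x : T) : seq T := if m x is Ack _ _ ts then ts else [::].

Definition outval (o : T * nat) : nat := (nth (0, 0, 0) (outs o.1) o.2).1.1.
Definition outowner (o : T * nat) : key := (nth (0, 0, 0) (outs o.1) o.2).1.2.
Definition outdeleg (o : T * nat) : key := (nth (0, 0, 0) (outs o.1) o.2).2.

Definition refs (x : T) : seq T :=
  match m x with
  | Genesis _ => [::]
  | Tx i _ _ => [seq o.1 | o <- i]
  | Ack _ p ts => (if p is Some q then [:: q] else [::]) ++ ts
  end.
Definition refrel : rel T := fun x y => y \in refs x.

Definition past (x : T) : {set T} := [set y | connect refrel x y].
Definition pastS (A : {set T}) : {set T} := \bigcup_(a in A) past a.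

Definition spent_in (D : {set T}) (o : T * nat) : bool := [exists u in D, o \in ins u].

(* Stake delegated to validator v in D, counting the unspent outputs of the
   transactions of D that belong to the set C (C = transactions confirmed in D). *)
Definition stake (C D : {set T}) (v : key) : nat :=
  \sum_(t in D | t \in C)
     \sum_(i < size (outs t) | (outdeleg (t, val i) == v) && ~~ spent_in D (t, val i))
        outval (t, val i).

Definition signers (A : {set T}) (t : T) : seq key :=
  undup [seq ackv a | a <- enum A & is_ack a && (t \in ack_txs a)].

Definition shares (t u : T) : bool := has (fun o => o \in ins u) (ins t).

Variable g : T.
Variable M : nat.    (* total money *)

(* The stake "delegated in past(A)" only counts transactions confirmed in
   past(A); since stake is monotone in the set of counted confirmed
   transactions, we quantify over a set C of transactions confirmed in
   past(A) (this keeps the inductive definition strictly positive and is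
   equivalent to taking C = all transactions confirmed in past(A)). *)
Inductive confirmed : {set T} -> T -> Prop :=
| confirmed_genesis (D : {set T}) : g \in D -> confirmed D g
| confirmed_tx (D : {set T}) (t : T) (A C : {set T}) :
    t \in D -> is_ntx t ->
    (forall o, o \in ins t -> confirmed D o.1) ->
    A \subset D -> (forall a, a \in A -> is_ack a) ->
    (forall c, c \in C -> confirmed (pastS A) c) ->
    2 * M < 3 * (\sum_(v <- signers A t) stake C (pastS A) v) ->
    (forall u, u \in pastS A -> u != t -> ~~ shares t u) ->
    confirmed D t.

Definition spends : rel T := fun u t => has (fun o => o.1 == t) (ins u).
Definition depends (u t : T) : bool := connect spends u t.

Inductive conflict : T -> T -> Prop :=
| conflict_base t1 t2 : is_tx t1 -> is_tx t2 -> t1 != t2 -> shares t1 t2 -> conflict t1 t2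
| conflict_dep t1 t2 u1 u2 :
    conflict t1 t2 -> depends u1 t1 -> depends u2 t2 -> conflict u1 u2.

Variable time : T -> nat.       (* creation (issuing) time of each message *)
Variable honest : pred key.

Definition prefix (k : nat) : {set T} := [set x | time x < k].

Definition well_formed : Prop :=
  injective time /\
  (forall x y, refrel x y -> time y < time x) /\
  (forall x, is_genesis x = (x == g)) /\
  (forall x, g \in past x) /\
  \sum_(o <- outs g) o.1.1 = M /\
  (forall x i o v, m x = Tx i o v ->
     uniq i /\
     (forall p, p \in i -> is_tx p.1 /\ p.2 < size (outs p.1)) /\
     \sum_(p <- i) outval p = \sum_(q <- o) q.1) /\
  (forall a v p ts, m a = Ack v p ts ->
     (forall t, t \in ts -> is_tx t) /\
     (forall q, p = Some q -> is_ack q /\ ackv q = v)).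

Definition honest_chain : Prop :=
  forall a v p ts, m a = Ack v p ts -> honest v ->
    match p with
    | None => forall b, is_ack b -> ackv b = v -> ~ time b < time a
    | Some q => is_ack q /\ ackv q = v /\ time q < time a /\
        forall b, is_ack b -> ackv b = v -> ~ (time q < time b /\ time b < time a)
    end.

Definition honest_signing : Prop :=
  forall a b t1 t2, is_ack a -> is_ack b -> ackv a = ackv b -> honest (ackv a) ->
    t1 \in ack_txs a -> t2 \in ack_txs b -> t1 != t2 -> ~~ shares t1 t2.

Definition honest_spending : Prop :=
  forall o t1 t2, honest (outowner o) -> o \in ins t1 -> o \in ins t2 -> t1 = t2.

Definition adv_genesis : nat := \sum_(o <- outs g | ~~ honest o.2) o.1.1.
Definition adv_inc (k : nat) : nat :=
  \sum_(t | (time t < k) && is_ntx t && ~~ honest (txv t))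
     \sum_(o <- ins t | honest (outdeleg o)) outval o.
Definition adv_dec (C : {set T}) : nat :=
  \sum_(t in C | is_ntx t && honest (txv t))
     \sum_(o <- ins t | ~~ honest (outdeleg o)) outval o.

(* at all times k the adversary's count
     adv_genesis + adv_inc k - adv_dec {t confirmed in the DAG at time k}
   is < M/3.  (As adv_dec is monotone, quantifying over a set C of
   transactions confirmed at time k is equivalent.) *)
Definition adversary_bound : Prop :=
  forall k, exists C : {set T},
    (forall t, t \in C -> confirmed (prefix k) t) /\
    3 * (adv_genesis + adv_inc k) < M + 3 * adv_dec C.

End ABC.

(* A confirmation of t rests on a certificate: acks A signing t whose signers hold more than
   2M/3 of the stake of transactions confirmed in past(A), and no transaction of past(A) sharing
   an input with t. The key claim is that of any two certificates (t1, A1), (t2, A2), one sees the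
   other: t1 is in past(A2) or t2 is in past(A1). Hence distinct confirmed transactions share no
   input, and since the inputs of a confirmed transaction are confirmed, no conflict arises.

   The claim is proved by well-founded induction on the pair of certificates. If neither sees the
   other, no honest validator signs both t1 and t2, because its acks form a chain. By induction,
   the transactions confirmed in past(A1) or past(A2) lie in both pasts and never spend an output
   twice, so conservation of money bounds the stake of the signers of t1 plus the honest stake of
   the signers of t2 by M. Conservation of money on what is confirmed in past(A2) or up to the
   time of its latest member bounds the adversarial stake of the signers of t2 by the adversary's
   count, below M/3. Two quorums above 2M/3 cannot fit in M + M/3. *)

From Pilot Require Import Defs.
From mathcomp Require Import all_boot all_order zify boolp.
Set Implicit Arguments. Unset Strict Implicit. Unset Printing Implicit Defensive.
Import Order.TTheory.

Section Dag.
Variables (T : finType) (m : T -> msg T) (g : T) (M : nat) (time : T -> nat).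
Hypothesis wf : well_formed m g M time.

Lemma time_inj : injective time. Proof. by case: wf. Qed.

Lemma time_ref x y : y \in refs m x -> time y < time x.
Proof. by case: wf => _ [time_rel _] /(time_rel x y). Qed.

Lemma genesisE x : is_genesis m x = (x == g).
Proof. by case: wf => _ [_ []]. Qed.

Lemma genesis_past x : g \in past m x.
Proof. by case: wf => _ [_ [_ []]]. Qed.

Lemma ins_genesis : ins m g = [::].
Proof. by have := genesisE g; rewrite eqxx /is_genesis /ins; case: (m g). Qed.

Lemma ins_nontx t : ~~ is_ntx m t -> ins m t = [::].
Proof. by rewrite /is_ntx /ins; case: (m t). Qed.

Lemma genesis_value : \sum_(o <- outs m g) o.1.1 = M.
Proof. by case: wf => _ [_ [_ [_ []]]]. Qed.

Lemma tx_wf x i o v : m x = Tx i o v ->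
  [/\ uniq i, forall p, p \in i -> is_tx m p.1 /\ p.2 < size (outs m p.1)
    & \sum_(p <- i) outval m p = \sum_(q <- o) q.1].
Proof. by case: wf => _ [_ [_ [_ [_ [tx_ok _]]]]] /tx_ok [? []]. Qed.

Lemma ins_uniq t : uniq (ins m t).
Proof. by rewrite /ins; case E: (m t) => //; case: (tx_wf E). Qed.

Lemma ins_output t p : p \in ins m t -> p.2 < size (outs m p.1).
Proof. by rewrite /ins; case E: (m t) => // ?; case: (tx_wf E) => _ /(_ p) []. Qed.

Lemma past_refl x : x \in past m x.
Proof. by rewrite inE connect0. Qed.

Lemma past_ref x y : y \in refs m x -> y \in past m x.
Proof. by move=> yx; rewrite inE; apply: connect1. Qed.

Lemma past_trans x y z : y \in past m x -> z \in past m y -> z \in past m x.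
Proof. rewrite !inE; exact: connect_trans. Qed.

Lemma time_past x y : y \in past m x -> time y <= time x.
Proof.
rewrite inE => /connectP [p]; elim: p x => [|z p IH] x /=; first by move=> _ ->.
by case/andP=> /time_ref lt_zx /IH le_yz /le_yz /leq_trans; apply; apply: ltnW.
Qed.

Lemma time_past_lt x y : y \in past m x -> y != x -> time y < time x.
Proof.
move=> yx; rewrite ltn_neqAle time_past // andbT; apply: contra => /eqP.
by move/time_inj->.
Qed.

Lemma pastSP (A : {set T}) y :
  reflect (exists2 a, a \in A & y \in past m a) (y \in pastS m A).
Proof. exact: bigcupP. Qed.

Lemma pastS_past (A : {set T}) y z : y \in pastS m A -> z \in past m y -> z \in pastS m A.
Proof. by case/pastSP=> a aA ya /(past_trans ya) za; apply/pastSP; exists a. Qed.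

Lemma pastS_sub (A A' : {set T}) : A' \subset pastS m A -> pastS m A' \subset pastS m A.
Proof.
by move=> /subsetP sA'A; apply/subsetP=> y /pastSP [a /sA'A aA]; apply: pastS_past.
Qed.

Lemma genesis_pastS (A : {set T}) a : a \in A -> g \in pastS m A.
Proof. by move=> aA; apply/pastSP; exists a; last exact: genesis_past. Qed.

Lemma ack_txs_ref a t : t \in ack_txs m a -> t \in refs m a.
Proof. by rewrite /ack_txs /refs; case: (m a) => // v p ts tts; rewrite mem_cat tts orbT. Qed.

Lemma shares_sym t u : shares m t u = shares m u t.
Proof. by apply/hasP/hasP => -[o ot ou]; exists o. Qed.

End Dag.

Section HonestAcks.
Variables (T : finType) (m : T -> msg T) (g : T) (M : nat) (time : T -> nat).
Variable honest : pred key.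
Hypotheses (wf : well_formed m g M time) (hc : honest_chain m time honest).

Lemma ackE a : is_ack m a -> m a = Ack (ackv m a) (ack_prev m a) (ack_txs m a).
Proof. by rewrite /is_ack /ackv /ack_prev /ack_txs; case: (m a). Qed.

Lemma honest_ack_past v a b : honest v -> is_ack m a -> is_ack m b ->
  ackv m a = v -> ackv m b = v -> time a <= time b -> a \in past m b.
Proof.
move=> hv aack; have [n] := ubnP (time b); elim: n b => // n IH b.
rewrite ltnS => le_bn back av bv le_ab.
have [/(time_inj wf) ->|ne_ab] := eqVneq (time a) (time b); first exact: past_refl.
have lt_ab : time a < time b by rewrite ltn_neqAle ne_ab.
move: (hc (ackE back)); rewrite bv => /(_ hv).
case E: (ack_prev m b) => [q|]; last by move/(_ a aack av).
case=> qack [qv [lt_qb between]].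
have qb : q \in refs m b by rewrite /refs (ackE back) E mem_head.
apply: past_trans (past_ref qb) (IH q (leq_trans lt_qb le_bn) qack av qv _).
by rewrite leqNgt; apply/negP => lt_qa; apply: (between a).
Qed.

End HonestAcks.

Section Money.
Variables (T : finType) (m : T -> msg T) (g : T) (M : nat) (time : T -> nat).
Hypothesis wf : well_formed m g M time.

Definition input_closed (L : {set T}) :=
  forall t p, t \in L -> p \in ins m t -> p.1 \in L.
Definition no_double_spend (L : {set T}) :=
  forall t t' p, t \in L -> t' \in L -> p \in ins m t -> p \in ins m t' -> t = t'.

Definition out_value (P : pred key) t :=
  \sum_(i < size (outs m t) | P (outdeleg m (t, val i))) outval m (t, val i).
Definition in_value (P : pred key) t :=
  \sum_(p <- ins m t | P (outdeleg m p)) outval m p.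
Definition unspent (D : {set T}) (P : pred key) t :=
  \sum_(i < size (outs m t) | P (outdeleg m (t, val i)) && ~~ spent_in m D (t, val i))
    outval m (t, val i).

Lemma input_closedU (L1 L2 : {set T}) :
  input_closed L1 -> input_closed L2 -> input_closed (L1 :|: L2).
Proof.
move=> cl1 cl2 t p /setUP [tL | tL] pt; apply/setUP; first by left; apply: cl1 tL pt.
by right; apply: cl2 tL pt.
Qed.

Lemma sum_outputs (s : seq (T * nat)) (F : T * nat -> nat) : uniq s ->
  (forall p, p \in s -> p.2 < size (outs m p.1)) ->
  \sum_(p <- s) F p = \sum_x \sum_(i < size (outs m x)) ((x, val i) \in s) * F (x, val i).
Proof.
elim: s => [|[y j] s IH]; first by rewrite big_nil; symmetry; do 2!apply: big1 => ? _.
rewrite cons_uniq => /andP [ys us] valid.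
rewrite big_cons IH // => [|q qs]; last by apply: valid; rewrite inE qs orbT.
have lt_j : j < size (outs m y) by apply: (valid (y, j)); rewrite mem_head.
have -> : F (y, j) = \sum_x \sum_(i < size (outs m x)) ((x, val i) == (y, j)) * F (x, val i).
  rewrite (bigD1 y) //= [X in _ = _ + X]big1 ?addn0; last first.
    by move=> x /negbTE xy; apply: big1 => i _; rewrite xpair_eqE xy.
  rewrite (bigD1 (Ordinal lt_j)) //= [X in _ = _ + X]big1 ?addn0; last first.
    by move=> i; rewrite xpair_eqE eqxx -val_eqE /= => /negbTE ->.
  by rewrite eqxx mul1n.
rewrite -big_split; apply: eq_bigr => x _; rewrite -big_split; apply: eq_bigr => i _ /=.
by rewrite in_cons -mulnDl; case: eqP => [-> | _] //=; rewrite (negbTE ys).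
Qed.

Lemma count_spenders (L : {set T}) o : no_double_spend L ->
  \sum_(y in L) (o \in ins m y) = spent_in m L o.
Proof.
move=> nds; have [spent | not_spent] := boolP (spent_in m L o); last first.
  apply: big1 => y yL; apply/eqP; rewrite eqb0; apply: contraNN not_spent => oy.
  by apply/existsP; exists y; rewrite yL.
have /existsP [y /andP [yL oy]] := spent.
rewrite (bigD1 y) //= oy big1 // => y' /andP [y'L ne]; apply/eqP; rewrite eqb0.
by apply: contra ne => oy'; rewrite (nds _ _ _ y'L yL oy' oy).
Qed.

(* An output spent inside [L] is produced inside [L] and spent by a single member of [L], so
   the inputs of [L] count exactly its spent outputs. *)
Lemma money_conservation (P : pred key) (L : {set T}) : input_closed L -> no_double_spend L ->
  \sum_(t in L) out_value P t = \sum_(t in L) unspent L P t + \sum_(t in L) in_value P t.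
Proof.
move=> closed nds.
pose h o := if P (outdeleg m o) then outval m o else 0.
have -> : \sum_(t in L) in_value P t =
    \sum_(t in L) \sum_(i < size (outs m t) | P (outdeleg m (t, val i)) && spent_in m L (t, val i))
      outval m (t, val i).
  rewrite (eq_bigr (fun y =>
      \sum_x \sum_(i < size (outs m x)) ((x, val i) \in ins m y) * h (x, val i))); last first.
    move=> y _; rewrite /in_value big_mkcond sum_outputs ?(ins_uniq wf) // => p.
    exact: (ins_output wf).
  rewrite exchange_big /= (bigID (mem L)) /= [X in _ + X]big1 ?addn0 => [|x xL]; last first.
    rewrite exchange_big big1 // => i _; rewrite -big_distrl /= count_spenders //.
    case sp: (spent_in _ _ _) => //; case/existsP: sp => y /andP [yL /(closed _ _ yL) xL'].
    by rewrite xL' in xL.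
  apply: eq_bigr => x xL; rewrite exchange_big /= [RHS]big_mkcond; apply: eq_bigr => i _.
  rewrite -big_distrl /= count_spenders // /h.
  by case: (P _); case: (spent_in m L _); rewrite /= ?mul1n ?mul0n ?muln0.
rewrite -big_split; apply: eq_bigr => t _.
by rewrite /out_value (bigID (fun i : 'I__ => spent_in m L (t, val i))) /= addnC.
Qed.

End Money.

Lemma leq_sum_sub (I : finType) (P Q : pred I) (F G : I -> nat) :
  (forall i, P i -> Q i) -> (forall i, P i -> F i <= G i) ->
  \sum_(i | P i) F i <= \sum_(i | Q i) G i.
Proof.
move=> PQ FG; rewrite big_mkcond [leqRHS]big_mkcond leq_sum // => i _.
by case Pi: (P i); rewrite ?(PQ _ Pi) ?FG.
Qed.

Section Stake.
Variables (T : finType) (m : T -> msg T) (g : T) (M : nat) (time : T -> nat).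
Hypothesis wf : well_formed m g M time.

Local Notation unspent := (unspent m).

Lemma spent_in_sub (L D : {set T}) o : L \subset D -> spent_in m L o -> spent_in m D o.
Proof.
move=> /subsetP LD /existsP [u /andP [uL ou]]; apply/existsP; exists u.
by rewrite LD.
Qed.

Lemma unspent_mono (L D : {set T}) (P Q : pred key) t : L \subset D ->
  (forall v, P v -> Q v) -> unspent D P t <= unspent L Q t.
Proof.
move=> LD PQ; apply: leq_sum_sub => // i /andP [/PQ -> unspentD] /=.
by apply: contra unspentD; apply: spent_in_sub.
Qed.

Lemma unspent_disjoint (L : {set T}) (P Q : pred key) t :
  (forall v, P v -> Q v -> False) -> unspent L P t + unspent L Q t <= unspent L predT t.
Proof.
move=> PQ; rewrite /unspent big_mkcond [X in _ + X]big_mkcond [leqRHS]big_mkcond.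
rewrite -big_split leq_sum //= => i _.
case Pi: (P _); case Qi: (Q _); rewrite //= ?addn0 //.
by case: (PQ _ Pi Qi).
Qed.

Lemma unspent_split (D : {set T}) (P Q : pred key) t :
  unspent D P t = unspent D (predI P Q) t + unspent D (predI P (predC Q)) t.
Proof.
rewrite /unspent (bigID (fun i : 'I__ => Q (outdeleg m (t, val i)))) /=.
by congr (_ + _); apply: eq_bigl => i; rewrite andbAC.
Qed.

Lemma out_valueE (P : pred key) t :
  out_value m P t = \sum_(o <- outs m t | P o.2) o.1.1.
Proof. by rewrite /out_value (big_nth (0, 0, 0)) big_mkord. Qed.

Lemma out_value_tx (P : pred key) t : t != g ->
  out_value m P t = if is_ntx m t && P (txv m t) then in_value m predT t else 0.
Proof.
move=> ntg; have := genesisE wf t.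
rewrite (negbTE ntg) out_valueE /in_value /txv /ins /outs /is_genesis /is_ntx.
case E: (m t) => [o | i o v | v p ts] //= _; last by rewrite big_nil.
rewrite big_map /=; case: (P v); last by rewrite big_pred0.
by have [_ _ ->] := tx_wf wf E.
Qed.

Lemma out_value_total t : out_value m predT t = (t == g) * M + in_value m predT t.
Proof.
have [-> | ntg] := eqVneq t g.
  by rewrite out_valueE (genesis_value wf) /in_value (ins_genesis wf) big_nil addn0 mul1n.
rewrite out_value_tx // andbT /in_value; case: ifP => [_ | /negbT/ins_nontx ->] //.
by rewrite big_nil.
Qed.

Lemma sum_genesis_le (L : {set T}) c : \sum_(t in L) (t == g) * c <= c.
Proof.
apply: leq_trans (leq_sum_sub (Q := predT) (G := fun t => (t == g) * c) _ _) _ => //.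
by rewrite (bigD1 g) //= eqxx mul1n big1 ?addn0 // => t /negbTE ->.
Qed.

Lemma unspent_le_money (L : {set T}) : input_closed m L -> no_double_spend m L ->
  \sum_(t in L) unspent L predT t <= M.
Proof.
move=> closed nds; have := money_conservation wf predT closed nds.
rewrite (eq_bigr _ (fun t _ => out_value_total t)) big_split /=.
by have := sum_genesis_le L M; lia.
Qed.

(* Adversarial money enters [L] through adversarial genesis outputs and the inputs of
   adversarial transactions (counted by [adv_inc], as [L] precedes [k]) and leaves it through
   the inputs of honest transactions, among which those of [C] (counted by [adv_dec]). *)
Lemma unspent_adversary_lt (honest : pred key) (L C : {set T}) k :
  input_closed m L -> no_double_spend m L -> L \subset Defs.prefix time k -> C \subset L ->
  3 * (adv_genesis m g honest + adv_inc m time honest k) < M + 3 * adv_dec m honest C ->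
  3 * \sum_(t in L) unspent L (predC honest) t < M.
Proof.
move=> closed nds /subsetP Lk /subsetP CL bound.
pose J t := is_ntx m t && ~~ honest (txv m t).
have out_adv t : out_value m (predC honest) t =
    (t == g) * adv_genesis m g honest +
    (if J t then in_value m honest t + in_value m (predC honest) t else 0).
  have [-> | ntg] := eqVneq t g.
    by rewrite out_valueE mul1n /in_value (ins_genesis wf) !big_nil addn0 if_same addn0.
  by rewrite out_value_tx // mul0n add0n /in_value (bigID (fun p => honest (outdeleg m p))).
have := money_conservation wf (predC honest) closed nds.
rewrite (eq_bigr _ (fun t _ => out_adv t)) big_split /= -big_mkcondr big_split /=.
rewrite [X in _ = _ + X](bigID J) /=.
have inc : \sum_(t in L | J t) in_value m honest t <= adv_inc m time honest k.
  apply: leq_sum_sub => // t /andP [/Lk]; rewrite inE => -> /=.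
  by rewrite /J => /andP [-> ->].
have dec : adv_dec m honest C <= \sum_(t in L | ~~ J t) in_value m (predC honest) t.
  apply: leq_sum_sub => // t /andP [/CL -> /andP [_ ht]].
  by rewrite /J ht andbF.
by have := sum_genesis_le L (adv_genesis m g honest); lia.
Qed.

Lemma sum_unspent_sub (C L D : {set T}) (P Q : pred key) :
  C \subset L -> L \subset D -> (forall v, P v -> Q v) ->
  \sum_(x in D | x \in C) unspent D P x <= \sum_(x in L) unspent L Q x.
Proof.
move=> /subsetP CL LD PQ; apply: leq_sum_sub => [x /andP [_ /CL] // | x _].
exact: unspent_mono.
Qed.

Lemma quorums_le_money (L D1 D2 C1 C2 : {set T}) (S1 S2 : pred key) :
  input_closed m L -> no_double_spend m L ->
  C1 \subset L -> C2 \subset L -> L \subset D1 -> L \subset D2 ->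
  (forall v, S1 v -> S2 v -> False) ->
  \sum_(x in D1 | x \in C1) unspent D1 S1 x + \sum_(x in D2 | x \in C2) unspent D2 S2 x <= M.
Proof.
move=> closed nds C1L C2L LD1 LD2 disj.
apply: leq_trans (unspent_le_money closed nds).
apply: leq_trans (leq_add (sum_unspent_sub C1L LD1 (Q := S1) _)
                          (sum_unspent_sub C2L LD2 (Q := S2) _)) _ => //.
by rewrite -big_split leq_sum // => x _; apply: unspent_disjoint.
Qed.

Lemma signersP (A : {set T}) t v : reflect
  (exists a, [/\ a \in A, is_ack m a, t \in ack_txs m a & ackv m a = v]) (v \in signers m A t).
Proof.
rewrite /signers mem_undup; apply: (iffP mapP) => [[a] | [a [aA aack ta <-]]].
  by rewrite mem_filter mem_enum => /andP [/andP [aack ta] aA] ->; exists a.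
by exists a; rewrite // mem_filter mem_enum aA aack ta.
Qed.

Lemma stake_signers (A C D : {set T}) t :
  \sum_(v <- signers m A t) stake m C D v =
  \sum_(x in D | x \in C) unspent D (fun v => v \in signers m A t) x.
Proof.
rewrite /stake exchange_big /=; apply: eq_bigr => x _.
rewrite /unspent (eq_bigr _ (fun v _ => big_mkcond _ _)) exchange_big [RHS]big_mkcond /=.
apply: eq_bigr => i _; rewrite -big_mkcond /=.
rewrite (eq_bigr (fun _ => 1 * outval m (x, val i))) => [|v _]; last by rewrite mul1n.
rewrite -big_distrl /= sum1_count.
case: (~~ _); last by rewrite (eq_count (fun v => andbF _)) count_pred0 andbF.
rewrite (eq_count (fun v => andbT _)) andbT (eq_count (fun v => eq_sym _ v)).
by rewrite count_uniq_mem ?undup_uniq //; case: (_ \in _); rewrite ?mul1n.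
Qed.

Lemma quorum_signed (A C D : {set T}) t :
  0 < \sum_(v <- signers m A t) stake m C D v -> exists2 a, a \in A & t \in ack_txs m a.
Proof.
case E: (signers m A t) => [|v s]; first by rewrite big_nil.
have /signersP [a [aA _ ta _]] : v \in signers m A t by rewrite E mem_head.
by exists a.
Qed.

End Stake.

Lemma ex_bound_seq (X : eqType) (P : nat -> X -> Prop) (s : seq X) :
  (forall n n' x, n <= n' -> P n x -> P n' x) ->
  (forall x, x \in s -> exists n, P n x) -> exists n, forall x, x \in s -> P n x.
Proof.
move=> Pmono; elim: s => [|x s IH] Ps; first by exists 0.
have [n Pnx] := Ps x (mem_head x s).
have [n' Pn's] : exists n', forall y, y \in s -> P n' y.
  by apply: IH => y ys; apply: Ps; rewrite inE ys orbT.
exists (maxn n n') => y; rewrite inE => /predU1P [-> | ys].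
  exact: Pmono (leq_maxl n n') Pnx.
exact: Pmono (leq_maxr n n') (Pn's y ys).
Qed.

Section Depth.
Variables (T : finType) (m : T -> msg T) (g : T) (M : nat).

(* [confirmed] with its nesting depth made explicit: [cert conf D t A C] is the premise of
   [confirmed_tx] with [conf] for the recursive calls. The depth enters the induction measure. *)
Record cert (conf : {set T} -> T -> Prop) (D : {set T}) (t : T) (A C : {set T}) : Prop := Cert {
  cert_in : t \in D;
  cert_ntx : is_ntx m t;
  cert_ins : forall o, o \in ins m t -> conf D o.1;
  cert_acks_sub : A \subset D;
  cert_acks : forall a, a \in A -> is_ack m a;
  cert_counted : forall c, c \in C -> conf (pastS m A) c;
  cert_quorum : 2 * M < 3 * \sum_(v <- signers m A t) stake m C (pastS m A) v;
  cert_excl : forall u, u \in pastS m A -> u != t -> ~~ shares m t u }.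

Fixpoint confirmed_within (n : nat) (D : {set T}) (t : T) : Prop :=
  if n is n'.+1 then (t = g /\ g \in D) \/ exists A C, cert (confirmed_within n') D t A C
  else False.

Lemma cert_mono (conf conf' : {set T} -> T -> Prop) D t A C :
  (forall D t, conf D t -> conf' D t) -> cert conf D t A C -> cert conf' D t A C.
Proof. by move=> sub [*]; constructor; auto. Qed.

Lemma confirmed_within_mono n n' D t :
  n <= n' -> confirmed_within n D t -> confirmed_within n' D t.
Proof.
elim: n n' D t => // n IH [|n'] D t //= le_nn' [gen | [A [C c]]]; first by left.
by right; exists A, C; apply: cert_mono c => D' t'; apply: IH.
Qed.

Lemma confirmed_within_in n D t : confirmed_within n D t -> t \in D.
Proof. by case: n => //= n [[-> //] | [A [C /cert_in]]]. Qed.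

Lemma confirmed_within_exists D t : confirmed m g M D t -> exists n, confirmed_within n D t.
Proof.
elim=> [D' gD | D' t' A C tD ntx _ ins_conf AD acks _ C_conf quorum excl].
  by exists 1; left.
have [n1 ins_n] := ex_bound_seq (P := fun n o => confirmed_within n D' o.1)
  (fun n n' o => @confirmed_within_mono n n' D' o.1) ins_conf.
have C_ex c : c \in enum C -> exists n, confirmed_within n (pastS m A) c.
  by rewrite mem_enum; apply: C_conf.
have [n2 C_n] := ex_bound_seq (fun n n' c => @confirmed_within_mono n n' _ c) C_ex.
exists (maxn n1 n2).+1; right; exists A, C; constructor => //.
  by move=> o /ins_n; apply: confirmed_within_mono; apply: leq_maxl.
by move=> c cC; apply: confirmed_within_mono (leq_maxr n1 n2) (C_n c _); rewrite mem_enum.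
Qed.

Lemma confirmed_in D t : confirmed m g M D t -> t \in D.
Proof. by case. Qed.

Lemma confirmed_certified D t : confirmed m g M D t -> t != g ->
  exists n A C, cert (confirmed_within n) D t A C.
Proof.
move=> /confirmed_within_exists [[|n] //= conf ntg].
by case: conf => [[tg _] | [A [C c]]]; [rewrite tg eqxx in ntg | exists n, A, C].
Qed.

Variable time : T -> nat.
Hypothesis wf : well_formed m g M time.

Lemma confirmed_ins D t o : confirmed m g M D t -> o \in ins m t -> confirmed m g M D o.1.
Proof.
by case=> [D' _ | D' t' A C _ _ ins_conf *]; [rewrite (ins_genesis wf) | apply: ins_conf].
Qed.

Lemma confirmed_depends D u t : depends m u t -> confirmed m g M D u -> confirmed m g M D t.
Proof.
move=> /connectP [p]; elim: p u => [|w p IH] u /=; first by move=> _ ->.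
case/andP=> /hasP [o ou /eqP ow] wp tp cu.
by apply: IH wp tp _; rewrite -ow; apply: confirmed_ins cu ou.
Qed.

End Depth.

Lemma wf_ltn : well_founded (fun m n : nat => m < n).
Proof.
move=> n; have [k] := ubnP n; elim: k n => [//|k IH] n lt_nk.
by constructor => j lt_jn; apply: IH; apply: leq_trans lt_jn lt_nk.
Qed.

Section Lexi.
Context {d1 d2 : Order.disp_t} {T1 : orderType d1} {T2 : orderType d2}.

Lemma wf_ltxi :
  well_founded (<%O : rel T1) -> well_founded (<%O : rel T2) ->
  well_founded (<%O : rel (T1 *l T2)).
Proof.
move=> wf1 wf2 [x1 x2]; elim: (wf1 x1) x2 => {}x1 _ IH1 x2.
elim: (wf2 x2) => {}x2 _ IH2; constructor => -[y1 y2].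
rewrite ltxi_pair; case: (ltgtP y1 x1) => [lt1 _ | // | -> lt2]; [exact: IH1 | exact: IH2].
Qed.

Lemma ltxi_fst (a b : T1 *l T2) : (a.1 < b.1)%O -> (a < b)%O.
Proof.
case: a b => [a1 a2] [b1 b2] /= lt1; rewrite ltxi_pair; apply/andP; split; first exact: ltW.
by apply/implyP => le1; have := lt_le_trans lt1 le1; rewrite ltxx.
Qed.

Lemma ltxi_snd (a b : T1 *l T2) : a.1 = b.1 -> (a.2 < b.2)%O -> (a < b)%O.
Proof. by case: a b => [a1 a2] [b1 b2] /= -> lt2; rewrite ltxi_pair lexx lt2. Qed.

End Lexi.

Section PairKey.
Context {d : Order.disp_t} {S : orderType d}.
Local Open Scope order_scope.

(* The multiset extension of the order to pairs. *)
Definition pair_key (x y : S) : S *l S := (Order.max x y, Order.min x y).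

Lemma pair_keyC : commutative pair_key.
Proof. by move=> x y; rewrite /pair_key maxC minC. Qed.

Lemma pair_key_lt x y e1 e2 : x < Order.max e1 e2 -> y < Order.max e1 e2 ->
  pair_key x y < pair_key e1 e2.
Proof. by move=> hx hy; apply: ltxi_fst; rewrite gt_max hx hy. Qed.

Lemma pair_key_ltr e z z' : z < z' -> pair_key e z < pair_key e z'.
Proof.
move=> lt_zz'; case: (leP z' e) => [le_z'e | lt_ez'].
  have le_ze : z <= e by apply: ltW (lt_le_trans lt_zz' le_z'e).
  by apply: ltxi_snd; rewrite /pair_key /= ?max_l ?min_r.
by apply: ltxi_fst; rewrite /pair_key /= (max_r (ltW lt_ez')) gt_max lt_ez'.
Qed.

End PairKey.

Lemma quorums_overlap (M s1 h a : nat) :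
  2 * M < 3 * s1 -> 2 * M < 3 * (h + a) -> s1 + h <= M -> 3 * a < M -> False.
Proof. lia. Qed.

Section Main.
Variables (T : finType) (m : T -> msg T) (g : T) (M : nat) (time : T -> nat).
Variable honest : pred key.
Hypotheses (wf : well_formed m g M time) (hc : honest_chain m time honest).
Hypothesis adv : adversary_bound m g M time honest.

Local Notation cert_at n := (cert m M (confirmed_within m g M n)).

Definition horizon (A : {set T}) : nat := \max_(a in A) time a.
Definition stamp n (A : {set T}) : nat *l nat := (horizon A, n).
Definition certified n t (A : {set T}) : Prop := exists D C, cert_at n D t A C.
Definition visible t1 (A1 : {set T}) t2 (A2 : {set T}) : Prop :=
  t1 \in pastS m A2 \/ t2 \in pastS m A1.

Definition confirmed_set n (A : {set T}) : {set T} :=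
  [set y in pastS m A | `[< confirmed_within m g M n (pastS m A) y >]].
Definition confirmed_before k : {set T} :=
  [set w | `[< confirmed m g M (Defs.prefix time k) w >]].

Lemma visible_sym t1 A1 t2 A2 : visible t1 A1 t2 A2 -> visible t2 A2 t1 A1.
Proof. by case; [right | left]. Qed.

Lemma horizon_pastS (A : {set T}) y : y \in pastS m A -> time y <= horizon A.
Proof.
case/pastSP=> a aA ya; apply: leq_trans (time_past wf ya) _.
exact: leq_bigmax_cond.
Qed.

Lemma horizon_sub (A A' : {set T}) : A' \subset pastS m A -> horizon A' <= horizon A.
Proof. by move=> /subsetP A'A; apply/bigmax_leqP => a /A'A; apply: horizon_pastS. Qed.

Lemma cert_signed n D t A C : cert_at n D t A C ->
  exists2 a, a \in A & t \in past m a /\ time t < time a.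
Proof.
case=> _ _ _ _ _ _ quorum _.
have [a aA ta] : exists2 a, a \in A & t \in ack_txs m a.
  by apply: (quorum_signed (C := C) (D := pastS m A)); lia.
have ta_ref := ack_txs_ref ta.
by exists a => //; split; [exact: past_ref ta_ref | exact: (time_ref wf ta_ref)].
Qed.

Lemma cert_horizon n D t A C : cert_at n D t A C -> time t < horizon A.
Proof. by case/cert_signed=> a aA [_ lt_ta]; apply: leq_trans lt_ta (leq_bigmax_cond _ aA). Qed.

Lemma cert_depth_pos n D t A C : cert_at n D t A C -> 0 < n.
Proof.
case: n => // c; have := cert_quorum c.
rewrite big1 ?muln0 // => v _; rewrite /stake big_pred0 // => x.
by apply/negP => /andP [_ /(cert_counted c)].
Qed.

Lemma ack_ntx x : is_ack m x -> is_ntx m x = false.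
Proof. by rewrite /is_ack /is_ntx; case: (m x). Qed.

Lemma certified_excl n t A n' t' A' : certified n t A -> certified n' t' A' ->
  t != t' -> visible t A t' A' -> ~~ shares m t t'.
Proof.
move=> [D [C c]] [D' [C' c']] ne [tA' | t'A]; first by rewrite shares_sym (cert_excl c' tA').
by apply: (cert_excl c t'A); rewrite eq_sym.
Qed.

Lemma certified_genesis n t A : certified n t A -> g \in pastS m A.
Proof. by case=> D [C /cert_signed [a aA _]]; apply: (genesis_pastS wf aA). Qed.

Lemma cert_pastS_horizon n D t A C y : cert_at n D t A C ->
  y \in pastS m A -> ~~ is_ack m y -> time y < horizon A.
Proof.
move=> c /pastSP [a aA ya] nack; apply: leq_trans (leq_bigmax_cond _ aA).
apply: (time_past_lt wf ya); apply: contraNneq nack => ->.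
exact: cert_acks c a aA.
Qed.

Lemma confirmed_setP n A y :
  y \in confirmed_set n A -> confirmed_within m g M n (pastS m A) y.
Proof. by rewrite inE => /andP [_ /asboolP]. Qed.

Lemma confirmed_set_sub n A : confirmed_set n A \subset pastS m A.
Proof. by apply/subsetP => y; rewrite inE => /andP []. Qed.

Lemma cert_counted_sub n D t A C : cert_at n D t A C -> C \subset confirmed_set n A.
Proof.
move=> c; apply/subsetP => x xC; have conf := cert_counted c xC.
by rewrite inE (confirmed_within_in conf); apply/asboolP.
Qed.

Lemma confirmed_set_closed n A : input_closed m (confirmed_set n A).
Proof.
move=> y p /confirmed_setP; case: n => // n [[-> _] | [A' [C' c]] py].
  by rewrite (ins_genesis wf).
have conf := confirmed_within_mono (leqnSn n) (cert_ins c py).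
by rewrite inE (confirmed_within_in conf); apply/asboolP.
Qed.

Lemma confirmed_set_cert n A y : y \in confirmed_set n A -> y != g ->
  exists n' A', [/\ certified n' y A', A' \subset pastS m A & (stamp n' A' < stamp n A)%O].
Proof.
move=> /confirmed_setP; case: n => // n [[-> _] | [A' [C' c]]]; first by rewrite eqxx.
move=> _; have A'A := cert_acks_sub c; exists n, A'; split => //; first by exists (pastS m A), C'.
rewrite /stamp ltxi_pair; apply/andP; split; first exact: horizon_sub.
by apply/implyP => _; exact: ltnSn.
Qed.

Lemma confirmed_beforeP k w :
  w \in confirmed_before k -> confirmed m g M (Defs.prefix time k) w.
Proof. by rewrite inE => /asboolP. Qed.

Lemma confirmed_before_prefix k : confirmed_before k \subset Defs.prefix time k.
Proof. by apply/subsetP => w /confirmed_beforeP /confirmed_in. Qed.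

Lemma confirmed_before_closed k : input_closed m (confirmed_before k).
Proof.
move=> w p /confirmed_beforeP conf pw; rewrite inE; apply/asboolP.
exact: (confirmed_ins wf conf pw).
Qed.

Lemma confirmed_before_cert k w : w \in confirmed_before k -> w != g ->
  exists n A, certified n w A /\ horizon A < k.
Proof.
move=> /confirmed_beforeP conf /(confirmed_certified conf) [n [A [C c]]].
exists n, A; split; first by exists (Defs.prefix time k), C.
have k_pos : 0 < k by move: (confirmed_in conf); rewrite inE; apply: leq_ltn_trans.
rewrite -(prednK k_pos) ltnS; apply/bigmax_leqP => a /(subsetP (cert_acks_sub c)).
by rewrite inE => lt_ak; rewrite -ltnS prednK.
Qed.

Lemma honest_signer_visible (A1 A2 : {set T}) t1 t2 v : honest v ->
  v \in signers m A1 t1 -> v \in signers m A2 t2 -> visible t1 A1 t2 A2.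
Proof.
move=> hv /signersP [a [aA1 aack ta av]] /signersP [b [bA2 back tb bv]].
have [le_ab | /ltnW le_ba] := leqP (time a) (time b).
  left; apply/pastSP; exists b => //.
  exact: past_trans (honest_ack_past wf hc hv aack back av bv le_ab) (past_ref (ack_txs_ref ta)).
right; apply/pastSP; exists a => //.
exact: past_trans (honest_ack_past wf hc hv back aack bv av le_ba) (past_ref (ack_txs_ref tb)).
Qed.

Definition visible_below (e : nat *l nat) : Prop :=
  forall n t A n' t' A', certified n t A -> certified n' t' A' ->
    (stamp n A < e)%O -> (stamp n' A' < e)%O -> visible t A t' A'.

Lemma visible_below_le e e' : (e' <= e)%O -> visible_below e -> visible_below e'.
Proof.
move=> le_e'e sv n t A n' t' A' c c' lt lt'.
by apply: sv c c' (lt_le_trans lt le_e'e) (lt_le_trans lt' le_e'e).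
Qed.

Lemma no_double_spend_below e (L : {set T}) : visible_below e ->
  (forall y, y \in L -> y != g -> exists n A, certified n y A /\ (stamp n A < e)%O) ->
  no_double_spend m L.
Proof.
move=> sv small y y' p yL y'L py py'; apply/eqP/negPn/negP => ne.
have ng z : p \in ins m z -> z != g by apply: contraTneq => ->; rewrite (ins_genesis wf).
have [n [A [cy ly]]] := small y yL (ng y py).
have [n' [A' [cy' ly']]] := small y' y'L (ng y' py').
have := certified_excl cy cy' ne (sv _ _ _ _ _ _ cy cy' ly ly').
by move/negP; apply; apply/hasP; exists p.
Qed.

Lemma confirmed_set_below n A e : (stamp n A <= e)%O ->
  forall y, y \in confirmed_set n A -> y != g ->
  exists n' A', certified n' y A' /\ (stamp n' A' < e)%O.
Proof.
move=> le_e y yS ng; have [n' [A' [c _ lt]]] := confirmed_set_cert yS ng.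
by exists n', A'; split => //; apply: lt_le_trans lt le_e.
Qed.

Lemma confirmed_set_visible n t A n' A' : certified n t A ->
  (forall n'' t'' A'', certified n'' t'' A'' -> (stamp n'' A'' < stamp n' A')%O ->
     visible t A t'' A'') ->
  t \notin pastS m A' -> confirmed_set n' A' \subset pastS m A.
Proof.
move=> c vis tA'; apply/subsetP => y yS; have [-> | ng] := eqVneq y g.
  exact: certified_genesis c.
have [n'' [A'' [c'' A''A' lt]]] := confirmed_set_cert yS ng.
case: (vis _ _ _ c'' lt) => // tA''.
by move: tA'; rewrite (subsetP (pastS_sub A''A') _ tA'').
Qed.

Lemma confirmed_before_latest n A x w : visible_below (stamp n A) ->
  x \in confirmed_set n A -> (forall y, y \in confirmed_set n A -> time y <= time x) ->
  w \in confirmed_before (time x).+1 -> w != g ->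
  (exists n' A', certified n' w A' /\ (stamp n' A' < stamp n A)%O) /\ w \in pastS m A.
Proof.
move=> sv xS latest wG ng.
have [n' [A' [[D' [C' c']] hor]]] := confirmed_before_cert wG ng; rewrite ltnS in hor.
have nxg : x != g.
  apply: (contraTneq _ (cert_horizon c')) => xg; rewrite xg in hor; rewrite -leqNgt.
  exact: leq_trans hor (time_past wf (genesis_past wf w)).
have [nx [Ax [cx AxA ltx]]] := confirmed_set_cert xS nxg.
have [Dx [Cx cx']] := cx.
have lt' : (stamp n' A' < stamp n A)%O.
  apply: ltxi_fst; apply: leq_ltn_trans hor _.
  exact: leq_trans (cert_horizon cx') (horizon_sub AxA).
have c'cert : certified n' w A' by exists D', C'.
split; first by exists n', A'.
case: (sv _ _ _ _ _ _ c'cert cx lt' ltx) => [wAx | xA']; first exact: subsetP (pastS_sub AxA) _ wAx.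
have nack : ~~ is_ack m x by apply/negP => /ack_ntx; rewrite (cert_ntx cx').
by have := cert_pastS_horizon c' xA' nack; rewrite ltnNge hor.
Qed.

Lemma honest_quorums_le n1 D1 t1 A1 C1 n2 D2 t2 A2 C2 :
  visible_below (Order.max (stamp n1 A1) (stamp n2 A2)) ->
  cert_at n1 D1 t1 A1 C1 -> cert_at n2 D2 t2 A2 C2 ->
  confirmed_set n1 A1 \subset pastS m A2 -> confirmed_set n2 A2 \subset pastS m A1 ->
  ~ visible t1 A1 t2 A2 ->
  \sum_(v <- signers m A1 t1) stake m C1 (pastS m A1) v +
  \sum_(x in pastS m A2 | x \in C2)
     unspent m (pastS m A2) (predI (fun v => v \in signers m A2 t2) honest) x <= M.
Proof.
move=> sv c1 c2 S1A2 S2A1 nvis; rewrite stake_signers.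
apply: (quorums_le_money wf (L := confirmed_set n1 A1 :|: confirmed_set n2 A2)).
- exact: input_closedU (@confirmed_set_closed n1 A1) (@confirmed_set_closed n2 A2).
- apply: (no_double_spend_below sv) => y /setUP [] yS; apply: confirmed_set_below yS.
    by rewrite le_max lexx.
  by rewrite le_max lexx orbT.
- exact: subset_trans (cert_counted_sub c1) (subsetUl _ _).
- exact: subset_trans (cert_counted_sub c2) (subsetUr _ _).
- by rewrite subUset confirmed_set_sub S2A1.
- by rewrite subUset confirmed_set_sub S1A2.
by move=> v s1 /andP [s2 hv]; apply: nvis; apply: honest_signer_visible hv s1 s2.
Qed.

(* With [x] the latest transaction confirmed in past(A), the adversary bound at the time just
   after [x] covers everything confirmed in past(A), and by induction whatever is confirmed by
   then lies in past(A). *)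
Lemma adversary_quorum_lt n D t A C : visible_below (stamp n A) -> cert_at n D t A C ->
  3 * \sum_(x in pastS m A | x \in C)
        unspent m (pastS m A) (predI (fun v => v \in signers m A t) (predC honest)) x < M.
Proof.
move=> sv c; set S := confirmed_set n A.
have gA : g \in pastS m A by apply: (@certified_genesis n t); exists D, C.
have gS : g \in S.
  rewrite inE gA; apply/asboolP; case: n c sv {S} (cert_depth_pos c) => // n _ _ _.
  by left.
have [x xS latest] : exists2 x, x \in S & forall y, y \in S -> time y <= time x.
  by case: (arg_maxnP time gS) => x xS xmax; exists x.
pose k := (time x).+1; set L := S :|: confirmed_before k.
have [Ck [Ck_conf bound]] := adv k.
have LA : L \subset pastS m A.
  rewrite subUset confirmed_set_sub; apply/subsetP => w wG.
  have [-> // | ng] := eqVneq w g.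
  exact: (confirmed_before_latest sv xS latest wG ng).2.
apply: leq_ltn_trans (unspent_adversary_lt wf (L := L) _ _ _ _ bound).
- rewrite leq_mul2l /=; apply: sum_unspent_sub LA _ => [|v /andP []//].
  exact: subset_trans (cert_counted_sub c) (subsetUl _ _).
- exact: input_closedU (@confirmed_set_closed n A) (@confirmed_before_closed k).
- apply: (no_double_spend_below sv) => y /setUP [yS | yG] ng.
    exact: confirmed_set_below (lexx _) _ yS ng.
  exact: (confirmed_before_latest sv xS latest yG ng).1.
- rewrite subUset confirmed_before_prefix andbT; apply/subsetP => y yS.
  by rewrite inE ltnS latest.
apply/subsetP => w wCk; apply/setUP; right.
by rewrite inE; apply/asboolP; apply: Ck_conf.
Qed.

Lemma certs_visible n1 D1 t1 A1 C1 n2 D2 t2 A2 C2 :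
  (forall n t A n' t' A', certified n t A -> certified n' t' A' ->
     (pair_key (stamp n A) (stamp n' A') < pair_key (stamp n1 A1) (stamp n2 A2))%O ->
     visible t A t' A') ->
  cert_at n1 D1 t1 A1 C1 -> cert_at n2 D2 t2 A2 C2 -> visible t1 A1 t2 A2.
Proof.
move=> IH c1 c2; have cd1 : certified n1 t1 A1 by exists D1, C1.
have cd2 : certified n2 t2 A2 by exists D2, C2.
have sv : visible_below (Order.max (stamp n1 A1) (stamp n2 A2)).
  by move=> n t A n' t' A' c c' lt lt'; apply: IH c c' (pair_key_lt lt lt').
have [t1A2 | t1A2] := boolP (t1 \in pastS m A2); first by left.
have [t2A1 | t2A1] := boolP (t2 \in pastS m A1); first by right.
have nvis : ~ visible t1 A1 t2 A2 by case; apply/negP.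
have S2A1 : confirmed_set n2 A2 \subset pastS m A1.
  apply: (confirmed_set_visible cd1 _ t1A2) => n t A c lt.
  exact: IH cd1 c (pair_key_ltr _ lt).
have S1A2 : confirmed_set n1 A1 \subset pastS m A2.
  apply: (confirmed_set_visible cd2 _ t2A1) => n t A c lt.
  apply: visible_sym; apply: IH c cd2 _.
  by rewrite pair_keyC [X in (_ < X)%O]pair_keyC pair_key_ltr.
have honest_le := honest_quorums_le sv c1 c2 S1A2 S2A1 nvis.
have le_e2 : (stamp n2 A2 <= Order.max (stamp n1 A1) (stamp n2 A2))%O by rewrite le_max lexx orbT.
have adv_lt := adversary_quorum_lt (visible_below_le le_e2 sv) c2.
have q1 := cert_quorum c1; have q2 := cert_quorum c2.
rewrite stake_signers (eq_bigr _ (fun x _ => unspent_split m _ _ honest x)) big_split /= in q2.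
by case: (quorums_overlap q1 q2 honest_le adv_lt).
Qed.

Lemma certified_visible n1 t1 A1 n2 t2 A2 :
  certified n1 t1 A1 -> certified n2 t2 A2 -> visible t1 A1 t2 A2.
Proof.
have wf_key : well_founded (<%O : rel ((nat *l nat) *l (nat *l nat))).
  by apply: wf_ltxi; apply: wf_ltxi; exact: wf_ltn.
move: n1 t1 A1 n2 t2 A2.
suff key_ind K n1 t1 A1 n2 t2 A2 : pair_key (stamp n1 A1) (stamp n2 A2) = K ->
    certified n1 t1 A1 -> certified n2 t2 A2 -> visible t1 A1 t2 A2.
  by move=> n1 t1 A1 n2 t2 A2; apply: key_ind erefl.
elim/(well_founded_ind wf_key): K n1 t1 A1 n2 t2 A2 => K IH n1 t1 A1 n2 t2 A2 eK.
move=> [D1 [C1 c1]] [D2 [C2 c2]]; apply: certs_visible c1 c2 => n t A n' t' A' c c' lt.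
by apply: (IH _ _ n t A n' t' A' erefl c c'); rewrite -eK.
Qed.

Lemma confirmed_not_shares D1 D2 t1 t2 :
  confirmed m g M D1 t1 -> confirmed m g M D2 t2 -> t1 != t2 -> ~~ shares m t1 t2.
Proof.
move=> conf1 conf2 ne; apply/negP => /hasP [o o1 o2].
have ng u : o \in ins m u -> u != g by apply: contraTneq => ->; rewrite (ins_genesis wf).
have [n1 [A1 [C1 c1]]] := confirmed_certified conf1 (ng _ o1).
have [n2 [A2 [C2 c2]]] := confirmed_certified conf2 (ng _ o2).
have cd1 : certified n1 t1 A1 by exists D1, C1.
have cd2 : certified n2 t2 A2 by exists D2, C2.
move: (certified_excl cd1 cd2 ne (certified_visible cd1 cd2)) => /negP; apply.
by apply/hasP; exists o.
Qed.

End Main.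

Theorem theorem5 (T : finType) (m : T -> msg T) (g : T) (M : nat)
    (time : T -> nat) (honest : pred key) :
  well_formed m g M time ->
  honest_chain m time honest ->
  honest_signing m honest ->
  honest_spending m honest ->
  adversary_bound m g M time honest ->
  forall t1 t2 : T,
    confirmed m g M [set: T] t1 -> confirmed m g M [set: T] t2 ->
    ~ conflict m t1 t2.
Proof.
move=> wf hc _ _ adv t1 t2 conf1 conf2 conflict12.
elim: conflict12 conf1 conf2 => [u1 u2 _ _ ne shared | u1 u2 w1 w2 _ IH dep1 dep2] conf1 conf2.
  by move: (confirmed_not_shares wf hc adv conf1 conf2 ne); rewrite shared.
exact: IH (confirmed_depends wf dep1 conf1) (confirmed_depends wf dep2 conf2).
Qed.
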